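(* Let $(p_{nm})_{n,m\in\{0,1,2\}}$ be a probability distribution on $\mathbb{Z}_3\times\mathbb{Z}_3$ and define $L_1=p_{00}+p_{10}+p_{20}$, $L_2=p_{00}+p_{01}+p_{02}$, $L_3=p_{00}+p_{11}+p_{22}$, $L_4=p_{00}+p_{12}+p_{21}$. If $p_{00}>1/3$, then $L_{\max}:=\max\{L_1,L_2,L_3,L_4\}>1/2$.
   Context: The $p_{nm}$ are the Bell-diagonal probabilities of a two-qutrit state; $L_1,\dots,L_4$ are the weights associated with the four mutually unbiased bases (the four lines through the origin of $\mathbb{Z}_3\times\mathbb{Z}_3$). *)

From mathcomp Require Import all_boot all_order all_algebra.
Set Implicit Arguments. Unset Strict Implicit. Unset Printing Implicit Defensive.
Import Order.TTheory GRing.Theory Num.Theory.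
Local Open Scope ring_scope.

Definition is_prob (R : realFieldType) (p : 'I_3 -> 'I_3 -> R) : Prop :=
  (forall n m, 0 <= p n m) /\ \sum_(n < 3) \sum_(m < 3) p n m = 1.

Definition o3 (k : nat) : 'I_3 := inord k.

Section L.
Variables (R : realFieldType) (p : 'I_3 -> 'I_3 -> R).
Let P (n m : nat) := p (o3 n) (o3 m).
Definition L1 := P 0 0 + P 1 0 + P 2 0.
Definition L2 := P 0 0 + P 0 1 + P 0 2.
Definition L3 := P 0 0 + P 1 1 + P 2 2.
Definition L4 := P 0 0 + P 1 2 + P 2 1.
Definition Lmax := Num.max (Num.max L1 L2) (Num.max L3 L4).
End L.

(* The four lines through the origin of Z_3 x Z_3 cover the origin four times
   and every other point exactly once, so L1 + L2 + L3 + L4 = 3 p00 + 1 > 2.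
   The largest of the four weights is at least their mean, which exceeds 1/2. *)
From mathcomp Require Import all_boot all_order all_algebra.
From mathcomp Require Import ring lra.
Import Order.TTheory GRing.Theory Num.Theory.
Local Open Scope ring_scope.

Lemma sum_ord3 (V : nmodType) (F : 'I_3 -> V) :
  \sum_(i < 3) F i = F (o3 0) + F (o3 1) + F (o3 2).
Proof.
rewrite !big_ord_recl big_ord0 addr0 addrA /o3.
by congr (_ + _ + _); congr F; apply: val_inj; rewrite /= inordK.
Qed.

Lemma sum_lines (R : realFieldType) (p : 'I_3 -> 'I_3 -> R) :
  L1 p + L2 p + L3 p + L4 p
  = 3 * p (o3 0) (o3 0) + \sum_(n < 3) \sum_(m < 3) p n m.
Proof. rewrite !sum_ord3 /L1 /L2 /L3 /L4; ring. Qed.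

Lemma sum4_le_max {R : realDomainType} (a b c d : R) :
  a + b + c + d <= 4 * Num.max (Num.max a b) (Num.max c d).
Proof.
set M := Num.max _ _.
have [aM bM cM dM] : [/\ a <= M, b <= M, c <= M & d <= M].
  by rewrite /M !le_max !lexx !orbT.
lra.
Qed.

Theorem lemma4 (R : realFieldType) (p : 'I_3 -> 'I_3 -> R) :
  is_prob p -> 1 / 3 < p (o3 0) (o3 0) -> 1 / 2 < Lmax p.
Proof.
move=> [_ total1] p00_gt.
have : _ <= 4 * Lmax p := sum4_le_max (L1 p) (L2 p) (L3 p) (L4 p).
rewrite sum_lines total1.
(* Without abstracting these atoms first, lra does not terminate here. *)
move: (Lmax p) (p (o3 0) (o3 0)) p00_gt => M p00.
lra.
Qed.
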